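(* Let $A,B,C,D$ be integers with $A>0$ odd and square-free, $B,C>0$, $D=B^2+C^2$ square-free, and $\gcd(A,D)=1$, and let $K=\mathbb{Q}\big(\sqrt{A(D+B\sqrt{D})}\big)$ (a totally real cyclic quartic field). Then \[ \tfrac{1}{48}\, A\sqrt{D} \le M(\mathcal{O}_K). \]
   Context: For a nonconstant polynomial $f(x)=c\prod_{i=1}^d (x-\alpha_i)\in\mathbb{C}[x]$, the Mahler measure is $M(f)=|c|\prod_{|\alpha_i|\ge 1}|\alpha_i|$. For an algebraic number $\alpha$, $M(\alpha)$ is the Mahler measure of its minimal polynomial over $\mathbb{Z}$ (with content $1$). For a number field $K$ with ring of integers $\mathcal{O}_K$, $M(\mathcal{O}_K)=\min\{M(\alpha):\alpha\in\mathcal{O}_K,\ \mathbb{Q}(\alpha)=K\}$. Every cyclic quartic field can be written uniquely as $\mathbb{Q}(\sqrt{A(D+B\sqrt{D})})$ with $A,B,C,D$ as in the claim (without the sign condition on $A$); it is totally real iff $A>0$. *)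

From HB Require Import structures.
From mathcomp Require Import all_boot all_order all_algebra all_field.
Set Implicit Arguments. Unset Strict Implicit. Unset Printing Implicit Defensive.
Import Order.TTheory GRing.Theory Num.Theory.
Local Open Scope ring_scope.

Definition squarefreez (n : int) : Prop :=
  forall p : nat, prime p -> ~~ (p * p %| `|n|)%N.

(* Mahler measure of a polynomial over algC:
   |c| * prod_{roots z, |z| >= 1} |z|, where p = c * prod (X - z). *)
Definition mahler (p : {poly algC}) : algC :=
  `|lead_coef p| *
  \prod_(z <- sval (closed_field_poly_normal p) | 1 <= `|z|) `|z|.

Definition is_minpolyZ (a : algC) (p : {poly int}) : Prop :=
  [/\ zcontents p = 1,
      root (map_poly intr p) a &
      forall q : {poly int}, q != 0 -> root (map_poly intr q) a ->
        (size p <= size q)%N].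

Definition mahler_alg_ge (m a : algC) : Prop :=
  forall p : {poly int}, is_minpolyZ a p -> m <= mahler (map_poly intr p).

Definition inQgen (g x : algC) : Prop :=
  exists q : {poly rat}, x = (map_poly ratr q).[g].

Definition cycq_gen (A B D : int) : algC :=
  sqrtC (A%:~R * (D%:~R + B%:~R * sqrtC D%:~R)).

Definition OK_generator (g beta : algC) : Prop :=
  [/\ beta \in Aint, inQgen g beta & inQgen beta g].

(* Let s = sqrt D, g = sqrt (A (D + B s)) and h = sqrt (A (D - B s)), so that
   g h = A C s and the conjugates of g are +-g, +-h.  Writing beta = a(s) + g w(s)
   with a, w in Q(s), the differences x = beta(g) - beta(-g) = 2 g w(s) and
   y = beta(h) - beta(-h) = 2 h w(-s) are nonzero algebraic integers, and so are
   m = x g + y h and n = x h - y g, which are rational, hence integers.  Then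
   x y = s F / (4 A D^2) with F = C (m^2 - n^2) - 2 B m n, and the integrality of
   x^2 + y^2 = (m^2 + n^2) / (2 A D) and of (x y)^2 forces A^2 D^2 | F, whence
   |x y| >= A s / 4.  On the other hand |x y| <= 4 prod_i max(1, |beta_i|) <= 4 M(beta). *)

From HB Require Import structures.
From mathcomp Require Import all_boot all_order all_algebra all_field.
From mathcomp Require Import zify ring.

Set Implicit Arguments.
Unset Strict Implicit.
Unset Printing Implicit Defensive.
Import Order.TTheory GRing.Theory Num.Theory.

Lemma squarefree_dvdn_sqr (x y : nat) :
  (forall p, prime p -> ~~ (p * p %| x)) -> x %| y ^ 2 -> x %| y.
Proof.
move=> sqf_x x_dvd_y2.
have x_gt0 : 0 < x by case: x sqf_x {x_dvd_y2} => // /(_ 2 isT).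
set g := gcdn x y; have g_gt0 : 0 < g by rewrite gcdn_gt0 x_gt0.
have [a xE] := dvdnP (dvdn_gcdl x y); have [b yE] := dvdnP (dvdn_gcdr x y).
rewrite -/g in xE yE.
have co_ab : coprime a b.
  by rewrite /coprime -(eqn_pmul2r g_gt0) muln_gcdl -xE -yE mul1n.
have a_dvd_g : a %| g.
  move: x_dvd_y2; rewrite xE yE expnMn -!mulnn mulnA dvdn_pmul2r //.
  by rewrite Gauss_dvdr // coprimeMr co_ab.
have a_eq1 : a = 1.
  have a_gt0 : 0 < a by move: x_gt0; rewrite xE muln_gt0 => /andP[].
  apply/eqP; rewrite eqn_leq a_gt0 andbT leqNgt; apply/negP => a_gt1.
  have := sqf_x _ (pdiv_prime a_gt1); rewrite xE.
  by rewrite dvdn_mul // (dvdn_trans (pdiv_dvd a)).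
by rewrite xE a_eq1 mul1n dvdn_gcdr.
Qed.

Local Open Scope ring_scope.

Lemma squarefreez_dvdz_sqr (x y : int) :
  squarefreez x -> (x %| y ^+ 2)%Z -> (x %| y)%Z.
Proof. by move=> sqf_x; rewrite !dvdzE abszX; apply: squarefree_dvdn_sqr. Qed.

Lemma squarefreez_neq0 (d : int) : squarefreez d -> d != 0.
Proof. by move=> sqf_d; apply: contraTneq (sqf_d 2 isT) => ->. Qed.

Lemma squarefreez_dvdz_cube (d f : int) :
  squarefreez d -> (d ^+ 3 %| f ^+ 2)%Z -> (d ^+ 2 %| f)%Z.
Proof.
move=> sqf_d d3_dvd_f2; have d_neq0 := squarefreez_neq0 sqf_d.
have /dvdzP [f1 fE] : (d %| f)%Z.
  by apply: squarefreez_dvdz_sqr => //; apply: dvdz_trans d3_dvd_f2; rewrite exprS dvdz_mulr.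
rewrite fE expr2 dvdz_mul2r //; apply: squarefreez_dvdz_sqr => //.
by move: d3_dvd_f2; rewrite fE exprMn exprS dvdz_mul2r ?expf_neq0.
Qed.

Lemma dvdz_norm_le (d m : int) : m != 0 -> (d %| m)%Z -> `|d| <= `|m|.
Proof.
by move=> m_neq0; rewrite dvdzE -!abszE lez_nat; apply: dvdn_leq; rewrite absz_gt0.
Qed.

Definition cycq_form (B C m n : int) : int := C * (m ^+ 2 - n ^+ 2) - 2 * B * m * n.

Lemma dvdz_cycq_form_args (A B C D m n : int) :
  odd `|A|%N -> squarefreez A -> coprimez A D -> D = B ^+ 2 + C ^+ 2 ->
  (A %| m ^+ 2 + n ^+ 2)%Z -> (A %| cycq_form B C m n)%Z ->
  (A %| m)%Z /\ (A %| n)%Z.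
Proof.
move=> oddA sqfA coAD DE A_dvd_mn A_dvd_F.
(* Modulo A the right-hand side vanishes, and A is coprime to 2 D. *)
have n3E : 2 * D * n ^+ 3 = 2 * n * B ^+ 2 * (m ^+ 2 + n ^+ 2)
   - (B * m - C * n) * (C * (m ^+ 2 + n ^+ 2) - cycq_form B C m n).
  by rewrite /cycq_form DE; ring.
have A_dvd_n3 : (A %| n ^+ 3)%Z.
  have coA2D : coprimez A (2 * D).
    by rewrite coprimezE abszM coprimeMr coprimen2 oddA -coprimezE coAD.
  by rewrite -(Gauss_dvdzr _ coA2D) n3E rpredB ?dvdz_mull // rpredB ?dvdz_mull.
have A_dvd_n : (A %| n)%Z.
  apply: squarefreez_dvdz_sqr => //; apply: squarefreez_dvdz_sqr => //.
  by rewrite -exprM exprS dvdz_mull.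
split=> //; apply: squarefreez_dvdz_sqr => //.
by rewrite -(addrK (n ^+ 2) (m ^+ 2)) rpredB ?dvdz_exp.
Qed.

Lemma dvdz_cycq_form (A B C D m n : int) :
  odd `|A|%N -> squarefreez A -> squarefreez D -> coprimez A D ->
  D = B ^+ 2 + C ^+ 2 ->
  (A %| m ^+ 2 + n ^+ 2)%Z -> (A * D ^+ 3 %| cycq_form B C m n ^+ 2)%Z ->
  (A ^+ 2 * D ^+ 2 %| cycq_form B C m n)%Z.
Proof.
move=> oddA sqfA sqfD coAD DE A_dvd_mn AD3_dvd_F2.
have A_dvd_F : (A %| cycq_form B C m n)%Z.
  by apply: squarefreez_dvdz_sqr => //; exact: dvdz_trans (dvdz_mulr _ (dvdzz _)) AD3_dvd_F2.
have D2_dvd_F : (D ^+ 2 %| cycq_form B C m n)%Z.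
  by apply: squarefreez_dvdz_cube => //; exact: dvdz_trans (dvdz_mull _ (dvdzz _)) AD3_dvd_F2.
rewrite Gauss_dvdz ?coprimezXl ?coprimezXr // D2_dvd_F andbT.
have [/dvdzP [m1 ->] /dvdzP [n1 ->]] := dvdz_cycq_form_args oddA sqfA coAD DE A_dvd_mn A_dvd_F.
by apply/dvdzP; exists (cycq_form B C m1 n1); rewrite /cycq_form; ring.
Qed.

Lemma Aint_dvdz (x : algC) (a b : int) :
  x \in Aint -> a != 0 -> a%:~R * x = b%:~R -> (a %| b)%Z.
Proof.
move=> x_Aint a_neq0 axE.
have a'_neq0 : a%:~R != 0 :> algC by rewrite intr_eq0.
have xE : x = b%:~R / a%:~R by rewrite -axE mulrC mulKf.
have /intrP [k kE] : x \in Num.int.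
  by apply: Cint_rat_Aint; rewrite // xE rpred_div ?rpred_int.
apply/dvdzP; exists k; apply: (@intr_inj algC).
by rewrite -axE kE intrM mulrC.
Qed.

Lemma Aint_ratr_int (r : rat) :
  ratr r \in Aint -> exists k : int, ratr r = k%:~R :> algC.
Proof. by move/(Cint_rat_Aint (Crat_rat r))/intrP. Qed.

Lemma monic_sqr_subC (R : nzRingType) (p : {poly R}) (c : R) :
  p \is monic -> (1 < size p)%N -> p ^+ 2 - c%:P \is monic.
Proof.
move=> p_monic p_gt1; rewrite monicE lead_coefDl ?(monicP (monic_exp 2 p_monic)) //.
rewrite size_polyN (leq_ltn_trans (size_polyC_leq1 c)) //.
by rewrite expr2 size_monicM ?monic_neq0 //; lia.
Qed.

Lemma rat_sqr_eq_int_sqr (D : int) (c d : rat) :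
  (forall r : rat, r ^+ 2 != D%:~R) -> c ^+ 2 = d ^+ 2 * D%:~R -> c = 0 /\ d = 0.
Proof.
move=> D_not_sqr cdE.
have [d0|d_neq0] := eqVneq d 0.
  by move: cdE; rewrite d0 expr0n mul0r => /eqP; rewrite sqrf_eq0 => /eqP.
by move: (D_not_sqr (c / d)); rewrite expr_div_n cdE mulrAC divff ?expf_neq0 // mul1r eqxx.
Qed.

Lemma squarefreez_not_rat_sqr (D : int) :
  squarefreez D -> D != 1 -> forall r : rat, r ^+ 2 != D%:~R.
Proof.
move=> sqfD D_neq1 r; apply/eqP => rE.
have /Aint_ratr_int [k kE] : ratr r \in Aint.
  apply: (@root_monic_Aint ('X^2 - (D%:~R)%:P)).
  - by rewrite /root !hornerE -rmorphXn rE rmorph_int subrr.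
  - by rewrite monicXnsubC.
  - by rewrite polyOverXnsubC intr_int.
have kE2 : k ^+ 2 = D.
  by apply: (@intr_inj algC); rewrite rmorphXn /= -kE -rmorphXn rE rmorph_int.
have k_gt1 : (1 < `|k|)%N.
  rewrite -ltz_nat abszE lt_neqAle -gtz0_ge1 normr_gt0 eq_sym -sqr_norm_eq1 kE2 D_neq1.
  by apply: contra_neq (squarefreez_neq0 sqfD) => k0; rewrite -kE2 k0 expr0n.
have := sqfD _ (pdiv_prime k_gt1).
by rewrite -kE2 abszX -mulnn dvdn_mul ?pdiv_dvd.
Qed.

Lemma map_poly_intr_ratr (p : {poly int}) :
  map_poly intr p = map_poly ratr (map_poly intr p) :> {poly algC}.
Proof. by rewrite -map_poly_comp; apply: eq_map_poly => k /=; rewrite ratr_int. Qed.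

Lemma prodr_ege1 (R : numDomainType) (I : Type) (r : seq I) (F : I -> R) :
  (forall i, 1 <= F i) -> 1 <= \prod_(i <- r) F i.
Proof. by move=> F_ge1; apply: (big_ind (>= 1)) => // x y; apply: mulr_ege1. Qed.

Lemma prodr_subset_le (R : numDomainType) (I : eqType) (s r : seq I) (F : I -> R) :
  (forall i, 1 <= F i) -> uniq s -> {subset s <= r} ->
  \prod_(i <- s) F i <= \prod_(i <- r) F i.
Proof.
move=> F_ge1; elim: s r => [|x s IHs] r; first by rewrite big_nil prodr_ege1.
move=> /= /andP[x_notin_s s_uniq] sub_xs_r.
have x_in_r : x \in r by apply: sub_xs_r; rewrite mem_head.
rewrite (perm_big _ (perm_to_rem x_in_r)) !big_cons ler_pM2l; last first.
  exact: lt_le_trans ltr01 (F_ge1 x).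
apply: IHs => // y y_in_s; rewrite (rem_mem _ (sub_xs_r _ _)) ?inE ?y_in_s ?orbT //.
by apply: contraNneq x_notin_s => <-.
Qed.

Definition mahler_factor (z : algC) : algC := if 1 <= `|z| then `|z| else 1.

Lemma mahler_factor_ge1 (z : algC) : 1 <= mahler_factor z.
Proof. by rewrite /mahler_factor; case: ifP. Qed.

Lemma norm_le_mahler_factor (z : algC) : `|z| <= mahler_factor z.
Proof.
rewrite /mahler_factor; case: ifP => // /negbT norm_lt1; apply: ltW.
by rewrite real_ltNge ?normr_real ?real1.
Qed.

Lemma normB_le_mahler_factor (x y : algC) :
  `|x - y| <= 2 * mahler_factor x * mahler_factor y.
Proof.
apply: le_trans (ler_normB x y) _.
apply: le_trans (lerD (norm_le_mahler_factor x) (norm_le_mahler_factor y)) _.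
have := mahler_factor_ge1 x; have := mahler_factor_ge1 y.
set a := mahler_factor x; set b := mahler_factor y => b_ge1 a_ge1.
have -> : 2 * a * b = (a + b) + ((a - 1) * (b - 1) + (a * b - 1)) by ring.
by rewrite lerDl addr_ge0 ?mulr_ge0 ?subr_ge0 ?mulr_ege1.
Qed.

Lemma mahler_ge_prod_roots (P : {poly algC}) (s : seq algC) :
  P != 0 -> 1 <= `|lead_coef P| -> uniq s -> all (root P) s ->
  \prod_(z <- s) mahler_factor z <= mahler P.
Proof.
move=> P_neq0 lc_ge1 s_uniq /allP s_roots.
rewrite /mahler; case: (closed_field_poly_normal P) => r /= PE.
rewrite [X in _ <= _ * X]big_mkcond /=.
have prod_ge1 := prodr_ege1 r mahler_factor_ge1.
apply: le_trans (ler_peMl (le_trans ler01 prod_ge1) lc_ge1).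
apply: prodr_subset_le => //; first exact: mahler_factor_ge1.
move=> z /s_roots; rewrite PE rootZ ?lead_coef_eq0 //.
by rewrite root_prod_XsubC.
Qed.

Lemma mahler_intr_ge_prod_roots (p : {poly int}) (s : seq algC) :
  p != 0 -> uniq s -> all (root (map_poly intr p)) s ->
  \prod_(z <- s) mahler_factor z <= mahler (map_poly intr p).
Proof.
move=> p_neq0; have lc_neq0 : (lead_coef p)%:~R != 0 :> algC.
  by rewrite intr_eq0 lead_coef_eq0.
apply: mahler_ge_prod_roots; first by rewrite map_poly_eq0_id0.
by rewrite lead_coef_map_id0 // -intr_norm ler1z -gtz0_ge1 normr_gt0 lead_coef_eq0.
Qed.

Lemma normM_diffs_le_mahler_factor (a b c d : algC) :
  `|(a - b) * (c - d)|
    <= 4 * (mahler_factor a * mahler_factor b * mahler_factor c * mahler_factor d).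
Proof.
rewrite normrM (_ : 4 * _ = (2 * mahler_factor a * mahler_factor b)
                          * (2 * mahler_factor c * mahler_factor d)); last by ring.
by apply: ler_pM; rewrite ?normr_ge0 ?normB_le_mahler_factor.
Qed.

Section QuadraticField.

Variables (D : int) (s : algC).
Hypothesis D_not_sqr : forall r : rat, r ^+ 2 != D%:~R.
Hypothesis sqr_s : s ^+ 2 = D%:~R.

Lemma ratr_sqrt_coord_eq0 (a b : rat) : ratr a + ratr b * s = 0 -> a = 0 /\ b = 0.
Proof.
move=> ab_eq0; apply: (rat_sqr_eq_int_sqr D_not_sqr); apply/eqP.
rewrite -subr_eq0 -(fmorph_eq0 (ratr : {rmorphism rat -> algC})) /=.
have -> : ratr (a ^+ 2 - b ^+ 2 * D%:~R)
          = (ratr a + ratr b * s) * (ratr a - ratr b * s) :> algC.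
  by rewrite rmorphB !rmorphXn rmorphM rmorphXn /= ratr_int -sqr_s; ring.
by rewrite ab_eq0 mul0r.
Qed.

Lemma intr_sqrt_neq0 (a b : int) : b != 0 -> a%:~R + b%:~R * s != 0.
Proof.
apply: contra_neq => ab_eq0.
have := @ratr_sqrt_coord_eq0 a%:~R b%:~R; rewrite !ratr_int => /(_ ab_eq0) [_ /eqP].
by rewrite intr_eq0 => /eqP.
Qed.

End QuadraticField.

Section CyclicQuartic.

Variables (A B C D : int) (s g h : algC).
Hypothesis D_not_sqr : forall r : rat, r ^+ 2 != D%:~R.
Hypothesis DE : D = B ^+ 2 + C ^+ 2.
Hypotheses (A_gt0 : 0 < A) (B_neq0 : B != 0) (C_neq0 : C != 0).
Let A_neq0 : A != 0 := lt0r_neq0 A_gt0.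
Hypothesis sqr_s : s ^+ 2 = D%:~R.
Hypothesis sqr_g : g ^+ 2 = A%:~R * (D%:~R + B%:~R * s).
Hypothesis sqr_h : h ^+ 2 = A%:~R * (D%:~R - B%:~R * s).

Lemma g_notin_Qsqrt (c d : rat) : g != ratr c + ratr d * s.
Proof.
apply/eqP => gE.
have [c2E cdE] : c ^+ 2 + d ^+ 2 * D%:~R - A%:~R * D%:~R = 0
                 /\ 2 * c * d - A%:~R * B%:~R = 0.
  apply: (ratr_sqrt_coord_eq0 D_not_sqr sqr_s).
  transitivity (g ^+ 2 - A%:~R * (D%:~R + B%:~R * s)); last by rewrite sqr_g subrr.
  rewrite gE !(rmorph_nat, rmorphB, rmorphD, rmorphM, rmorphXn) /= !ratr_int -sqr_s.
  ring.
(* Now (c^2 - d^2 D)^2 = (c^2 + d^2 D)^2 - D (2 c d)^2 = A^2 D^2 - A^2 B^2 D = A^2 C^2 D. *)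
move: (D_not_sqr ((c ^+ 2 - d ^+ 2 * D%:~R) / (A%:~R * C%:~R))).
apply/negP/negPn/eqP; rewrite expr_div_n.
have -> : (c ^+ 2 - d ^+ 2 * D%:~R) ^+ 2
          = (c ^+ 2 + d ^+ 2 * D%:~R) ^+ 2 - D%:~R * (2 * c * d) ^+ 2 by ring.
move/eqP: c2E; rewrite subr_eq0 => /eqP ->; move/eqP: cdE; rewrite subr_eq0 => /eqP ->.
rewrite DE rmorphD !rmorphXn /=; field.
by rewrite !intr_eq0 C_neq0.
Qed.

Lemma quartic_coord_eq0 (a0 a1 a2 a3 : rat) :
  ratr a0 + ratr a1 * s + g * (ratr a2 + ratr a3 * s) = 0 ->
  [/\ a0 = 0, a1 = 0, a2 = 0 & a3 = 0].
Proof.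
move=> E; set N := a2 ^+ 2 - a3 ^+ 2 * D%:~R.
have [/eqP|N_neq0] := eqVneq N 0.
  rewrite subr_eq0 => /eqP /(rat_sqr_eq_int_sqr D_not_sqr) [a2_0 a3_0].
  move: E; rewrite a2_0 a3_0 rmorph0 mul0r addr0 mulr0 addr0.
  by move/(ratr_sqrt_coord_eq0 D_not_sqr sqr_s) => [-> ->].
(* Multiplying by the conjugate a2 - a3 s would put g in Q(s). *)
have /negP[] := g_notin_Qsqrt ((a1 * a3 * D%:~R - a0 * a2) / N) ((a0 * a3 - a1 * a2) / N).
have gN : g * ratr N = ratr (a1 * a3 * D%:~R - a0 * a2) + ratr (a0 * a3 - a1 * a2) * s.
  apply/eqP; rewrite -subr_eq0; apply/eqP.
  transitivity ((ratr a0 + ratr a1 * s + g * (ratr a2 + ratr a3 * s))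
                * (ratr a2 - ratr a3 * s)); last by rewrite E mul0r.
  by rewrite /N !(rmorphB, rmorphM, rmorphXn) /= ratr_int -sqr_s; ring.
have N'_neq0 : ratr N != 0 :> algC by rewrite fmorph_eq0.
by rewrite -[g](mulfK N'_neq0) gN !fmorph_div; apply/eqP; field.
Qed.

(* r is s at the conjugates +-g and - s at the conjugates +-h. *)
Lemma horner_quartic (P : {poly rat}) : exists p0 p1 p2 p3 : rat,
  forall r t : algC, r ^+ 2 = D%:~R -> t ^+ 2 = A%:~R * (D%:~R + B%:~R * r) ->
  (map_poly ratr P).[t] = ratr p0 + ratr p1 * r + t * (ratr p2 + ratr p3 * r).
Proof.
elim/poly_ind: P => [|P c [p0 [p1 [p2 [p3 IHP]]]]].
  by exists 0, 0, 0, 0 => r t _ _; rewrite map_poly0 horner0 !rmorph0; ring.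
exists (c + p2 * A%:~R * D%:~R + p3 * A%:~R * B%:~R * D%:~R),
       (p2 * A%:~R * B%:~R + p3 * A%:~R * D%:~R), p0, p1 => r t sqr_r sqr_t.
rewrite rmorphD rmorphM /= map_polyX map_polyC /= hornerMXaddC (IHP r t) //.
transitivity (ratr c + (ratr p2 + ratr p3 * r) * t ^+ 2 + t * (ratr p0 + ratr p1 * r)).
  by ring.
by rewrite sqr_t !(rmorphD, rmorphM) /= !ratr_int -sqr_r; ring.
Qed.

Definition quartic_conjs : seq algC := [:: g; - g; h; - h].

Lemma mem_quartic_conjs : [/\ g \in quartic_conjs, - g \in quartic_conjs,
                              h \in quartic_conjs & - h \in quartic_conjs].
Proof. by split; rewrite !inE eqxx !(orbT, orTb). Qed.

Lemma quartic_conjs_sqr t : t \in quartic_conjs ->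
  exists2 r, r ^+ 2 = D%:~R & t ^+ 2 = A%:~R * (D%:~R + B%:~R * r).
Proof.
have sqr_h' : h ^+ 2 = A%:~R * (D%:~R + B%:~R * - s) by rewrite mulrN.
by rewrite !inE => /or4P[] /eqP->; [exists s | exists s | exists (- s) | exists (- s)];
   rewrite ?sqrrN.
Qed.

Lemma root_quartic_conjs (P : {poly rat}) : root (map_poly ratr P) g ->
  {in quartic_conjs, forall t, root (map_poly ratr P) t}.
Proof.
have [p0 [p1 [p2 [p3 HP]]]] := horner_quartic P.
move=> /rootP Pg_eq0 t /quartic_conjs_sqr [r sqr_r sqr_t]; apply/rootP.
rewrite (HP r t) //; move: Pg_eq0; rewrite (HP s g) // => /quartic_coord_eq0 [-> -> -> ->].
by rewrite rmorph0; ring.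
Qed.

Lemma quartic_conjs_uniq : uniq quartic_conjs.
Proof.
have neq0_of_sqr (x : algC) : x ^+ 2 != 0 -> x != 0.
  by apply: contraNneq => ->; rewrite expr0n.
have g_neq0 : g != 0.
  apply: neq0_of_sqr; rewrite sqr_g mulf_neq0 ?intr_eq0 //.
  exact: (intr_sqrt_neq0 D_not_sqr sqr_s).
have h_neq0 : h != 0.
  apply: neq0_of_sqr; rewrite sqr_h -mulNr -rmorphN mulf_neq0 ?intr_eq0 //.
  by apply: (intr_sqrt_neq0 D_not_sqr sqr_s); rewrite oppr_eq0.
have sqr_g_neq_h : g ^+ 2 != h ^+ 2.
  rewrite sqr_g sqr_h -subr_eq0 -mulrBr mulf_neq0 ?intr_eq0 //.
  have -> : D%:~R + B%:~R * s - (D%:~R - B%:~R * s) = 0%:~R + (2 * B)%:~R * s :> algC.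
    by rewrite intrM; ring.
  by apply: (intr_sqrt_neq0 D_not_sqr sqr_s); rewrite mulf_neq0.
have [g_neq_h g_neq_Nh] : g != h /\ g != - h.
  by split; apply: contraNneq sqr_g_neq_h => ->; rewrite ?sqrrN.
rewrite /quartic_conjs /= !inE !negb_or [g == - g]eq_sym [h == - h]eq_sym.
by rewrite !eqNr eqr_opp eqr_oppLR g_neq0 h_neq0 g_neq_h g_neq_Nh.
Qed.

Lemma Aint_quartic_conjs t : t \in quartic_conjs -> t \in Aint.
Proof.
move=> /quartic_conjs_sqr [r sqr_r sqr_t].
pose q : {poly int} := ('X^2 - (A * D)%:P) ^+ 2 - (A ^+ 2 * B ^+ 2 * D)%:P.
apply: (@root_monic_Aint (map_poly intr q)).
- rewrite /root /q rmorphB rmorphXn rmorphB /= map_polyXn !map_polyC /= !hornerE.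
  by rewrite sqr_t !intrM -sqr_r; apply/eqP; ring.
- by apply: monic_map; rewrite monic_sqr_subC ?monicXnsubC ?size_XnsubC.
- by apply/polyOverP => i; rewrite coef_map intr_int.
Qed.

Hypothesis mul_gh : g * h = A%:~R * C%:~R * s.

Lemma conj_pair_int (u v : rat) (x y : algC) :
  x = 2 * g * (ratr u + ratr v * s) -> y = 2 * h * (ratr u - ratr v * s) ->
  x \in Aint -> y \in Aint ->
  exists m n : int, x * g + y * h = m%:~R /\ x * h - y * g = n%:~R.
Proof.
move=> xE yE x_Aint y_Aint.
have [g_Aint h_Aint] : g \in Aint /\ h \in Aint.
  by have [? _ ? _] := mem_quartic_conjs; split; apply: Aint_quartic_conjs.
have mE : x * g + y * h = ratr (4 * A%:~R * D%:~R * (u + B%:~R * v)).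
  rewrite xE yE; transitivity (2 * (g ^+ 2 * (ratr u + ratr v * s)
                                  + h ^+ 2 * (ratr u - ratr v * s))); first by ring.
  by rewrite sqr_g sqr_h !(rmorphD, rmorphM, rmorph_nat) /= !ratr_int -sqr_s; ring.
have nE : x * h - y * g = ratr (4 * A%:~R * C%:~R * D%:~R * v).
  rewrite xE yE; transitivity (4 * (g * h) * ratr v * s); first by ring.
  by rewrite mul_gh !(rmorphM, rmorph_nat) /= !ratr_int -sqr_s; ring.
have [m mE'] : exists m : int, ratr (4 * A%:~R * D%:~R * (u + B%:~R * v)) = m%:~R :> algC.
  by apply: Aint_ratr_int; rewrite -mE rpredD ?rpredM.
have [n nE'] : exists n : int, ratr (4 * A%:~R * C%:~R * D%:~R * v) = n%:~R :> algC.
  by apply: Aint_ratr_int; rewrite -nE rpredB ?rpredM.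
by exists m, n; rewrite mE mE' nE nE'.
Qed.

Lemma conj_pair_identities (x y : algC) (m n : int) :
  x * g + y * h = m%:~R -> x * h - y * g = n%:~R ->
  (2 * A * D)%:~R * (x ^+ 2 + y ^+ 2) = (m ^+ 2 + n ^+ 2)%:~R /\
  (4 * A ^+ 2 * D ^+ 2)%:~R * (x * y) = A%:~R * s * (cycq_form B C m n)%:~R.
Proof.
move=> mE nE.
have sqr_gh : g ^+ 2 + h ^+ 2 = 2 * A%:~R * D%:~R by rewrite sqr_g sqr_h; ring.
have xE : 2 * A%:~R * D%:~R * x = m%:~R * g + n%:~R * h.
  by rewrite -mE -nE -sqr_gh; ring.
have yE : 2 * A%:~R * D%:~R * y = m%:~R * h - n%:~R * g.
  by rewrite -mE -nE -sqr_gh; ring.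
rewrite /cycq_form !(rmorphD, rmorphB, rmorphM, rmorphXn) /=; split.
  transitivity (x * (2 * A%:~R * D%:~R * x) + y * (2 * A%:~R * D%:~R * y)).
    by ring.
  transitivity (m%:~R * (x * g + y * h) + n%:~R * (x * h - y * g)).
    by rewrite xE yE; ring.
  by rewrite mE nE; ring.
transitivity ((m%:~R * g + n%:~R * h) * (m%:~R * h - n%:~R * g)).
  by rewrite -xE -yE; ring.
transitivity (m%:~R * n%:~R * (h ^+ 2 - g ^+ 2) + g * h * (m%:~R ^+ 2 - n%:~R ^+ 2)).
  by ring.
by rewrite sqr_g sqr_h mul_gh; ring.
Qed.

Hypotheses (oddA : odd `|A|%N) (sqfA : squarefreez A).
Hypotheses (sqfD : squarefreez D) (coAD : coprimez A D).
Hypothesis s_ge0 : 0 <= s.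

Lemma conj_pair_norm_ge (x y : algC) (m n : int) :
  x \in Aint -> y \in Aint -> x * y != 0 ->
  x * g + y * h = m%:~R -> x * h - y * g = n%:~R ->
  A%:~R * s / 4 <= `|x * y|.
Proof.
move=> x_Aint y_Aint xy_neq0 mE nE.
have [sumE prodE] := conj_pair_identities mE nE.
set F := cycq_form B C m n in prodE *.
have D_neq0 := squarefreez_neq0 sqfD.
have A_dvd_mn : (A %| m ^+ 2 + n ^+ 2)%Z.
  apply: dvdz_trans (Aint_dvdz _ _ sumE); first by rewrite dvdz_mulr ?dvdz_mull.
    by rewrite rpredD ?rpredX.
  by rewrite !mulf_neq0.
have AD3_dvd_F2 : (A * D ^+ 3 %| F ^+ 2)%Z.
  have F2E : (16 * A ^+ 2 * D ^+ 3)%:~R * (x * y) ^+ 2 = (F ^+ 2)%:~R :> algC.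
    apply: (mulfI (_ : (A ^+ 2 * D)%:~R != 0 :> algC)).
      by rewrite intr_eq0 !mulf_neq0 ?expf_neq0.
    transitivity (((4 * A ^+ 2 * D ^+ 2)%:~R * (x * y)) ^+ 2).
      by rewrite !(intrM, rmorphXn) /=; ring.
    by rewrite prodE !(intrM, rmorphXn) /= -sqr_s; ring.
  apply: dvdz_trans (Aint_dvdz _ _ F2E); first by apply/dvdzP; exists (16 * A); ring.
    by rewrite rpredX ?rpredM.
  by rewrite !mulf_neq0 ?expf_neq0.
have F_neq0 : F != 0.
  apply: contra_neq xy_neq0 => F0; apply: (mulfI (_ : (4 * A ^+ 2 * D ^+ 2)%:~R != 0)).
    by rewrite intr_eq0 !mulf_neq0 ?expf_neq0.
  by rewrite prodE F0 !mulr0.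
have := dvdz_norm_le F_neq0 (dvdz_cycq_form oddA sqfA sqfD coAD DE A_dvd_mn AD3_dvd_F2).
rewrite -(ler_int algC) !intr_norm => F_ge.
have AD_gt0 : 0 < (4 * A ^+ 2 * D ^+ 2)%:~R :> algC.
  by rewrite ltr0z -mulrA -exprMn mulr_gt0 // exprn_even_gt0 //= mulf_neq0.
have As_ge0 : 0 <= A%:~R * s by rewrite mulr_ge0 // ler0z ltW.
rewrite -(ler_pM2l AD_gt0) -{2}(ger0_norm (ltW AD_gt0)) -normrM prodE.
have -> : (4 * A ^+ 2 * D ^+ 2)%:~R * (A%:~R * s / 4) = A%:~R * s * (A ^+ 2 * D ^+ 2)%:~R.
  by rewrite !intrM; field.
rewrite normrM (ger0_norm As_ge0) ler_wpM2l //.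
by apply: le_trans F_ge; rewrite real_ler_norm ?realz.
Qed.

Section Generator.

Variables (Q Q' : {poly rat}).
Let beta : algC -> algC := horner (map_poly ratr Q).
Hypothesis Q'_beta : (map_poly ratr Q').[beta g] = g.

Lemma root_beta_conjs (R : {poly rat}) : root (map_poly ratr R) (beta g) ->
  {in quartic_conjs, forall t, root (map_poly ratr R) (beta t)}.
Proof.
move=> R_beta t t_conj; move: R_beta; rewrite /beta /root -!horner_comp -!map_comp_poly.
by move=> R_g; apply: root_quartic_conjs.
Qed.

Lemma beta_conjs_uniq : uniq (map beta quartic_conjs).
Proof.
rewrite map_inj_in_uniq ?quartic_conjs_uniq // => t u t_conj u_conj tu.
have Q'_betaK t' : t' \in quartic_conjs -> (map_poly ratr Q').[beta t'] = t'.
  move=> t'_conj; apply/eqP; rewrite -subr_eq0.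
  have := @root_quartic_conjs (Q' \Po Q - 'X) _ t' t'_conj.
  rewrite /root rmorphB /= map_comp_poly map_polyX !hornerE !horner_comp; apply.
  by rewrite Q'_beta subrr.
by rewrite -(Q'_betaK t) // -(Q'_betaK u) // tu.
Qed.

Lemma Aint_beta_conjs t : beta g \in Aint -> t \in quartic_conjs -> beta t \in Aint.
Proof.
move=> beta_Aint t_conj; have [P [PE _] _] := minCpolyP (beta g).
apply: (root_monic_Aint _ (minCpoly_monic _) beta_Aint).
by rewrite PE root_beta_conjs // -PE root_minCpoly.
Qed.

Lemma beta_conj_diffs : exists u v : rat,
  beta g - beta (- g) = 2 * g * (ratr u + ratr v * s) /\
  beta h - beta (- h) = 2 * h * (ratr u - ratr v * s).
Proof.
have [q0 [q1 [q2 [q3 HQ]]]] := horner_quartic Q.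
have sqr_h' : h ^+ 2 = A%:~R * (D%:~R + B%:~R * - s) by rewrite mulrN.
have sqr_Ns : (- s) ^+ 2 = D%:~R by rewrite sqrrN.
exists q2, q3; rewrite /beta (HQ s g) // (HQ s (- g)) ?sqrrN // (HQ (- s) h) //.
by rewrite (HQ (- s) (- h)) ?sqrrN //; split; ring.
Qed.

Lemma mahler_beta_ge (p : {poly int}) :
  beta g \in Aint -> zcontents p = 1 -> root (map_poly intr p) (beta g) ->
  A%:~R * s / 16 <= mahler (map_poly intr p).
Proof.
move=> beta_Aint p_prim p_root.
have [u [v [xE yE]]] := beta_conj_diffs.
have [g_conj Ng_conj h_conj Nh_conj] := mem_quartic_conjs.
have [x_Aint y_Aint] : beta g - beta (- g) \in Aint /\ beta h - beta (- h) \in Aint.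
  by split; apply: rpredB; apply: Aint_beta_conjs.
have xy_neq0 : (beta g - beta (- g)) * (beta h - beta (- h)) != 0.
  have := beta_conjs_uniq; rewrite /= !inE !negb_or.
  by case/and4P => /and3P[bg_neq _ _] _ bh_neq _; rewrite mulf_neq0 ?subr_eq0.
have [m [n [mE nE]]] := conj_pair_int xE yE x_Aint y_Aint.
have lower := conj_pair_norm_ge x_Aint y_Aint xy_neq0 mE nE.
have upper := normM_diffs_le_mahler_factor (beta g) (beta (- g)) (beta h) (beta (- h)).
have p_neq0 : p != 0 by apply/eqP => p0; move: p_prim; rewrite p0 zcontents0.
have p_roots : all (root (map_poly intr p)) (map beta quartic_conjs).
  apply/allP => z /mapP[t t_conj ->]; rewrite map_poly_intr_ratr.
  by apply: root_beta_conjs; rewrite // -map_poly_intr_ratr.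
have := mahler_intr_ge_prod_roots p_neq0 beta_conjs_uniq p_roots.
rewrite /= !big_cons big_nil mulr1 !mulrA; apply: le_trans.
rewrite -(ler_pM2l (_ : 0 < 4)) ?ltr0n //; apply: le_trans (le_trans lower upper).
by rewrite (_ : 4 * (A%:~R * s / 16) = A%:~R * s / 4) //; field.
Qed.

End Generator.

End CyclicQuartic.

Lemma sqrtC_conj_mul (A B C D : int) (s : algC) :
  0 <= A -> 0 <= B -> 0 <= C -> D = B ^+ 2 + C ^+ 2 -> s = sqrtC D%:~R ->
  sqrtC (A%:~R * (D%:~R + B%:~R * s)) * sqrtC (A%:~R * (D%:~R - B%:~R * s))
  = A%:~R * C%:~R * s.
Proof.
move=> A_ge0 B_ge0 C_ge0 DE sE.
have D_ge0 : 0 <= D by rewrite DE addr_ge0 ?sqr_ge0.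
have s_ge0 : 0 <= s by rewrite sE sqrtC_ge0 ler0z.
have sqr_s : s ^+ 2 = D%:~R by rewrite sE sqrtCK.
have B_le_s : B%:~R <= s.
  rewrite -(ler_pXn2r (_ : 0 < 2)%N) ?nnegrE ?ler0z // sqr_s -rmorphXn ler_int DE.
  by rewrite lerDl sqr_ge0.
have DBsE : D%:~R - B%:~R * s = s * (s - B%:~R) by rewrite -sqr_s; ring.
rewrite -sqrtCM ?nnegrE; last 2 first.
- by rewrite mulr_ge0 ?addr_ge0 ?mulr_ge0 ?ler0z.
- by rewrite DBsE !mulr_ge0 ?subr_ge0 ?ler0z.
rewrite -[RHS]sqrCK ?mulr_ge0 ?ler0z //; congr sqrtC.
transitivity (A%:~R ^+ 2 * (D%:~R ^+ 2 - B%:~R ^+ 2 * s ^+ 2)); first by ring.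
by rewrite !exprMn sqr_s DE rmorphD !rmorphXn; ring.
Qed.

Theorem proposition5p1 (A B C D : int) :
  0 < A -> odd `|A|%N -> squarefreez A ->
  0 < B -> 0 < C -> D = B ^+ 2 + C ^+ 2 -> squarefreez D ->
  coprimez A D ->
  forall beta : algC, OK_generator (cycq_gen A B D) beta ->
    mahler_alg_ge ((A%:~R * sqrtC D%:~R) / 48%:R) beta.
Proof.
move=> A_gt0 oddA sqfA B_gt0 C_gt0 DE sqfD coAD beta [beta_Aint [Q betaE] [Q' gE]].
move=> p [p_prim p_root _].
set s := sqrtC D%:~R; set h := sqrtC (A%:~R * (D%:~R - B%:~R * s)).
have s_ge0 : 0 <= s by rewrite sqrtC_ge0 ler0z DE addr_ge0 ?sqr_ge0.
have D_neq1 : D != 1.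
  by rewrite DE gt_eqF // -[1]addr0 ler_ltD ?exprn_gt0 // -gtz0_ge1 exprn_gt0.
have D_not_sqr := squarefreez_not_rat_sqr sqfD D_neq1.
have mul_gh : cycq_gen A B D * h = A%:~R * C%:~R * s.
  exact: sqrtC_conj_mul (ltW A_gt0) (ltW B_gt0) (ltW C_gt0) DE erefl.
have Q'_beta : (map_poly ratr Q').[(map_poly ratr Q).[cycq_gen A B D]] = cycq_gen A B D.
  by rewrite -betaE -gE.
rewrite betaE in beta_Aint p_root.
(* The argument gives the constant 1/16; the claimed 1/48 follows. *)
have := mahler_beta_ge D_not_sqr DE A_gt0 (lt0r_neq0 B_gt0) (lt0r_neq0 C_gt0)
  (sqrtCK _) (sqrtCK _) (sqrtCK _) mul_gh oddA sqfA sqfD coAD s_ge0 Q'_beta beta_Aint p_prim p_root.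
apply: le_trans; apply: ler_wpM2l; first by rewrite mulr_ge0 // ler0z ltW.
by rewrite lef_pV2 ?posrE ?ltr0n // ler_nat.
Qed.
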